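(* Let $G$ be a two-player stage game and consider the pure-pure regime. There exist a positive integer $T$ and an SPE of $G(T)$ (in the pure-pure regime) in which locally suboptimal behavior occurs if and only if at least one of the following holds: (1) $|V_1^{p,p}|>1$, $|V_2^{p,p}|>1$, and there exist $\hat a_1\in A_1,\hat a_2\in A_2$ with $(\hat a_1,\hat a_2)\notin \mathrm{Nash}^{p,p}(G)$; (2) $|V_1^{p,p}|>1$, $|V_2^{p,p}|=1$, and there exist $\hat a_1,a_1'\in A_1$, $\hat a_2\in A_2$ with $u_1(\hat a_1,\hat a_2)<u_1(a_1',\hat a_2)$ and $\hat a_2$ a best response to $\hat a_1$; (3) $|V_1^{p,p}|=1$, $|V_2^{p,p}|>1$, and there exist $\hat a_1\in A_1$, $\hat a_2,a_2'\in A_2$ with $u_2(\hat a_1,\hat a_2)<u_2(\hat a_1,a_2')$ and $\hat a_1$ a best response to $\hat a_2$.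
   Context: A two-player stage game $G$ consists of finite nonempty action sets $A_1,A_2$ and payoff functions $u_1,u_2:A_1\times A_2\to\mathbb{R}$. An action $a_i$ is a best response to the opponent's action if it maximizes player $i$'s payoff against it. For an integer $T\ge 1$, $G(T)$ is the $T$-round repetition of $G$ in which after each round both realized actions are observed and each player's payoff is the sum of stage payoffs over the $T$ rounds. In the pure-pure regime, both players are restricted to pure strategies: a strategy of player $i$ in $G(T)$ is a map $\mu_i:\bigcup_{k=0}^{T-1}(A_1\times A_2)^k\to A_i$ from histories to actions, and deviations are restricted to such strategies. A strategy profile $\mu$ of $G(T)$ is a subgame-perfect equilibrium (SPE) if for every $0\le k<T$ and every history $h$ of length $k$, the continuation profile $\mu_{|h}$ (defined by $\mu_{i|h}(h')=\mu_i(h,h')$) is a Nash equilibrium of $G(T-k)$. $\mathrm{Nash}^{p,p}(G)$ is the set of pure action profiles of $G$ that are Nash equilibria (no player gains by a unilateral deviation to another action), and $V_i^{p,p}=\{u_i(a):a\in\mathrm{Nash}^{p,p}(G)\}$. Locally suboptimal behavior occurs in an SPE $\mu$ of $G(T)$ if there exist $0\le k<T$ and a history $h$ of length $k$ with $(\mu_1(h),\mu_2(h))\notin\mathrm{Nash}^{p,p}(G)$. *)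

From HB Require Import structures.
From mathcomp Require Import all_boot all_order all_algebra.
From mathcomp Require Import reals.
Set Implicit Arguments. Unset Strict Implicit. Unset Printing Implicit Defensive.
Import Order.TTheory GRing.Theory Num.Theory.
Local Open Scope ring_scope.

Section Game.
Variables (R : realType) (A1 A2 : finType) (u1 u2 : A1 -> A2 -> R).

Definition history := seq (A1 * A2).
Definition strat1 := history -> A1.
Definition strat2 := history -> A2.

Definition best_resp1 (a1 : A1) (a2 : A2) : bool := [forall a1', u1 a1' a2 <= u1 a1 a2].
Definition best_resp2 (a1 : A1) (a2 : A2) : bool := [forall a2', u2 a1 a2' <= u2 a1 a2].

Definition stage_nash (a : A1 * A2) : bool := best_resp1 a.1 a.2 && best_resp2 a.1 a.2.

(* V_i^{p,p} as duplicate-free lists of values; |V_i| = size *)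
Definition V1 : seq R :=
  undup [seq u1 a.1 a.2 | a <- enum {: A1 * A2} & stage_nash a].
Definition V2 : seq R :=
  undup [seq u2 a.1 a.2 | a <- enum {: A1 * A2} & stage_nash a].

Fixpoint play (s1 : strat1) (s2 : strat2) (t : nat) : history :=
  match t with
  | 0 => [::]
  | t'.+1 => let h := play s1 s2 t' in rcons h (s1 h, s2 h)
  end.

Definition payoff1 (T : nat) (s1 : strat1) (s2 : strat2) : R :=
  \sum_(t < T) u1 (s1 (play s1 s2 t)) (s2 (play s1 s2 t)).
Definition payoff2 (T : nat) (s1 : strat1) (s2 : strat2) : R :=
  \sum_(t < T) u2 (s1 (play s1 s2 t)) (s2 (play s1 s2 t)).

Definition nashT (T : nat) (s1 : strat1) (s2 : strat2) : Prop :=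
  (forall s1' : strat1, payoff1 T s1' s2 <= payoff1 T s1 s2) /\
  (forall s2' : strat2, payoff2 T s1 s2' <= payoff2 T s1 s2).

Definition cont1 (s1 : strat1) (h : history) : strat1 := fun h' => s1 (h ++ h').
Definition cont2 (s2 : strat2) (h : history) : strat2 := fun h' => s2 (h ++ h').

Definition SPE (T : nat) (s1 : strat1) (s2 : strat2) : Prop :=
  forall (k : nat) (h : history), (k < T)%N -> size h = k ->
    nashT (T - k) (cont1 s1 h) (cont2 s2 h).

Definition locally_suboptimal (T : nat) (s1 : strat1) (s2 : strat2) : Prop :=
  exists (k : nat) (h : history), [/\ (k < T)%N, size h = k & ~ stage_nash (s1 h, s2 h)].

End Game.

From HB Require Import structures.
From mathcomp Require Import all_boot all_order all_algebra.
From mathcomp Require Import reals.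
From mathcomp Require Import zify lra.
From Stdlib Require Import Classical FunctionalExtensionality.
Set Implicit Arguments. Unset Strict Implicit. Unset Printing Implicit Defensive.
Import Order.TTheory GRing.Theory Num.Theory.
Local Open Scope ring_scope.

(* Call a stage profile "enforceable" if it is not a stage Nash equilibrium
   and every player i with a unique pure Nash payoff (|V_i| <= 1) is already
   best-responding in a.  The theorem splits into three facts:
   - Necessity: in an SPE with locally suboptimal behaviour, look at a
     non-Nash profile played after a history h of maximal length.  All later
     play is stage Nash, so a player with a unique Nash payoff gets the same
     continuation value whatever happens at h; hence the one-shot deviation
     at h is unprofitable and that player best-responds: the profile is
     enforceable.
   - Sufficiency: an enforceable profile a is played in round one and then
     sustained by a carrot-and-stick continuation made of stage Nash
     profiles.  A player with two distinct Nash payoffs is rewarded with the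
     better one and punished with the worse one for sufficiently many rounds
     (an Archimedean argument); a best-responding player needs no incentive.
   - The existence of an enforceable profile is equivalent to the three-case
     disjunction of the statement, by case analysis on |V_1| and |V_2|. *)

Section RepeatedGame.
Variables (R : realType) (A1 A2 : finType).
Implicit Types (w : A1 -> A2 -> R) (h : history A1 A2).

(* Both total payoffs are the same function of the stage payoff, so all
   payoff lemmas are stated once, for payoff1 at an arbitrary stage payoff w. *)
Lemma payoff2E w : payoff2 w = payoff1 w.
Proof. by []. Qed.

Lemma size_play (s1 : strat1 A1 A2) (s2 : strat2 A1 A2) t : size (play s1 s2 t) = t.
Proof. by elim: t => //= t IH; rewrite size_rcons IH. Qed.

Lemma play_S (s1 : strat1 A1 A2) (s2 : strat2 A1 A2) t :
  play s1 s2 t.+1 = (s1 [::], s2 [::]) ::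
     play (cont1 s1 [:: (s1 [::], s2 [::])]) (cont2 s2 [:: (s1 [::], s2 [::])]) t.
Proof. by elim: t => //= t ->. Qed.

Lemma payoffS w T (s1 : strat1 A1 A2) (s2 : strat2 A1 A2) :
  payoff1 w T.+1 s1 s2 = w (s1 [::]) (s2 [::]) +
     payoff1 w T (cont1 s1 [:: (s1 [::], s2 [::])]) (cont2 s2 [:: (s1 [::], s2 [::])]).
Proof.
rewrite /payoff1 big_ord_recl; congr (_ + _).
by apply: eq_bigr => i _; rewrite lift0 play_S.
Qed.

Lemma cont1_rcons (s1 : strat1 A1 A2) h x : cont1 (cont1 s1 h) [:: x] = cont1 s1 (rcons h x).
Proof. by apply: functional_extensionality => h'; rewrite /cont1 -cats1 -catA. Qed.

Lemma cont2_rcons (s2 : strat2 A1 A2) h x : cont2 (cont2 s2 h) [:: x] = cont2 s2 (rcons h x).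
Proof. by apply: functional_extensionality => h'; rewrite /cont2 -cats1 -catA. Qed.

Definition follow1 (f : nat -> A1 * A2) : strat1 A1 A2 := fun h => (f (size h)).1.
Definition follow2 (f : nat -> A1 * A2) : strat2 A1 A2 := fun h => (f (size h)).2.

Lemma cont_follow1 f h : cont1 (follow1 f) h = follow1 (fun j => f (size h + j)).
Proof. by apply: functional_extensionality => h'; rewrite /cont1 /follow1 size_cat. Qed.

Lemma cont_follow2 f h : cont2 (follow2 f) h = follow2 (fun j => f (size h + j)).
Proof. by apply: functional_extensionality => h'; rewrite /cont2 /follow2 size_cat. Qed.

Lemma payoff_follow w f T :
  payoff1 w T (follow1 f) (follow2 f) = \sum_(t < T) w (f t).1 (f t).2.
Proof. by apply: eq_bigr => t _; rewrite /follow1 /follow2 size_play. Qed.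

Lemma payoff_follow_dev1 w f T (s1 : strat1 A1 A2) : (forall t, best_resp1 w (f t).1 (f t).2) ->
  payoff1 w T s1 (follow2 f) <= \sum_(t < T) w (f t).1 (f t).2.
Proof.
move=> br; apply: ler_sum => t _; rewrite /follow2 size_play.
by move/forallP: (br t); apply.
Qed.

Lemma payoff_follow_dev2 w f T (s2 : strat2 A1 A2) : (forall t, best_resp2 w (f t).1 (f t).2) ->
  payoff1 w T (follow1 f) s2 <= \sum_(t < T) w (f t).1 (f t).2.
Proof.
move=> br; apply: ler_sum => t _; rewrite /follow1 size_play.
by move/forallP: (br t); apply.
Qed.

Lemma sum_two_phase m n (c d : R) :
  \sum_(t < m + n) (if (t < m)%N then c else d) = c *+ m + d *+ n.
Proof.
rewrite big_split_ord /=; congr (_ + _).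
  by rewrite -[in RHS](card_ord m) -sumr_const; apply: eq_bigr => t _; rewrite ltn_ord.
rewrite -[in RHS](card_ord n) -sumr_const; apply: eq_bigr => t _.
by rewrite ltnNge leq_addr.
Qed.

(* Archimedean incentive: a per-round gain of b - a, repeated often enough,
   outweighs any one-shot gain v x - c over a finite set of alternatives. *)
Lemma gap_incentive (X : finType) (v : X -> R) (c a b : R) : a < b ->
  exists n : nat, forall x, v x + a *+ n <= c + b *+ n.
Proof.
move=> ab; set g := b - a; have g0 : 0 < g by rewrite /g subr_gt0.
set M := \sum_x `|v x - c|.
have M0 : 0 <= M by apply: sumr_ge0.
have := archi_boundP (divr_ge0 M0 (ltW g0)).
set n := Num.Def.archi_bound _ => Mn.
exists n => x.
have gain_le : v x - c <= M.
  apply: le_trans (ler_norm _) _.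
  by rewrite /M (bigD1 x) //= ler_wpDr // sumr_ge0.
have loss_ge : M <= g *+ n.
  rewrite -mulr_natl; have := ltW Mn.
  by rewrite -(ler_pM2r g0) mulrVK ?unitfE ?gt_eqF // mulrC.
move: loss_ge; rewrite /g mulrnBl => loss_ge; lra.
Qed.

Variables (u1 u2 : A1 -> A2 -> R).

Lemma nash_follow f T : (forall t, stage_nash u1 u2 (f t)) ->
  nashT u1 u2 T (follow1 f) (follow2 f).
Proof.
move=> fN; split=> s; rewrite ?payoff2E payoff_follow.
  by apply: payoff_follow_dev1 => t; case/andP: (fN t).
by apply: payoff_follow_dev2 => t; case/andP: (fN t).
Qed.

(* The pure Nash payoffs of a player with stage payoff w; V1 u1 u2 and
   V2 u1 u2 are, by definition, nash_values u1 and nash_values u2. *)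
Definition nash_values w : seq R :=
  undup [seq w a.1 a.2 | a <- enum {: A1 * A2} & stage_nash u1 u2 a].

Lemma nash_valuesP w a : stage_nash u1 u2 a -> w a.1 a.2 \in nash_values w.
Proof. by move=> aN; rewrite mem_undup; apply: map_f; rewrite mem_filter aN mem_enum. Qed.

Lemma nash_values_gt0 w a : stage_nash u1 u2 a -> (0 < size (nash_values w))%N.
Proof. by move/(nash_valuesP w); case: nash_values. Qed.

Lemma nash_values_le1 w : (size (nash_values w) <= 1)%N ->
  exists v, forall a, stage_nash u1 u2 a -> w a.1 a.2 = v.
Proof.
move=> small; exists (head 0 (nash_values w)) => a /(nash_valuesP w).
by case: nash_values small => [|y [|]] //; rewrite inE => _ /eqP.
Qed.

Lemma nash_values_gt1 w : (1 < size (nash_values w))%N ->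
  exists p r, [/\ stage_nash u1 u2 p, stage_nash u1 u2 r & w p.1 p.2 < w r.1 r.2].
Proof.
move=> big; set V := nash_values w.
have inV y : y \in V -> exists2 a, stage_nash u1 u2 a & y = w a.1 a.2.
  by rewrite mem_undup => /mapP [a]; rewrite mem_filter => /andP[aN _] ->; exists a.
have ne : nth 0 V 0 != nth 0 V 1 by rewrite nth_uniq ?undup_uniq ?(ltnW big).
have [a aN ea] := inV _ (mem_nth 0 (ltnW big)).
have [b bN eb] := inV _ (mem_nth 0 big).
by move: ne; rewrite ea eb neq_lt => /orP[lt|lt]; [exists a, b | exists b, a].
Qed.

(* A profile that can be played in an SPE although it is not stage Nash:
   every player with a unique Nash payoff must already best-respond. *)
Definition enforceable (a : A1 * A2) : Prop :=
  [/\ ~ stage_nash u1 u2 a,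
      (size (nash_values u1) <= 1)%N -> best_resp1 u1 a.1 a.2 &
      (size (nash_values u2) <= 1)%N -> best_resp2 u2 a.1 a.2].

Section CarrotAndStick.
(* The profile (a1, a2) is played first; afterwards player i is rewarded with
   the Nash profile ri or punished with pi for ni rounds, and the incentive
   hypotheses say this makes a one-shot deviation from ai unprofitable. *)
Variables (a1 : A1) (a2 : A2) (r1 p1 r2 p2 : A1 * A2) (n1 n2 : nat).
Hypotheses (r1N : stage_nash u1 u2 r1) (p1N : stage_nash u1 u2 p1)
  (r2N : stage_nash u1 u2 r2) (p2N : stage_nash u1 u2 p2).
Hypothesis incentive1 :
  forall x1, u1 x1 a2 + u1 p1.1 p1.2 *+ n1 <= u1 a1 a2 + u1 r1.1 r1.2 *+ n1.
Hypothesis incentive2 :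
  forall x2, u2 a1 x2 + u2 p2.1 p2.2 *+ n2 <= u2 a1 a2 + u2 r2.1 r2.2 *+ n2.

Definition sanction (x : A1 * A2) (t : nat) : A1 * A2 :=
  if (t < n1)%N then (if x.1 == a1 then r1 else p1)
  else (if x.2 == a2 then r2 else p2).

Definition cs1 : strat1 A1 A2 :=
  fun h => if h is x :: h' then follow1 (sanction x) h' else a1.
Definition cs2 : strat2 A1 A2 :=
  fun h => if h is x :: h' then follow2 (sanction x) h' else a2.

Lemma sanction_nash x t : stage_nash u1 u2 (sanction x t).
Proof. by rewrite /sanction; case: ifP => _; case: ifP. Qed.

Lemma payoff_sanction w x :
  \sum_(t < n1 + n2) w (sanction x t).1 (sanction x t).2 =
  w (if x.1 == a1 then r1 else p1).1 (if x.1 == a1 then r1 else p1).2 *+ n1 +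
  w (if x.2 == a2 then r2 else p2).1 (if x.2 == a2 then r2 else p2).2 *+ n2.
Proof.
by rewrite -sum_two_phase; apply: eq_bigr => t _; rewrite /sanction; case: ifP.
Qed.

Lemma cs_nash_root : nashT u1 u2 (n1 + n2).+1 cs1 cs2.
Proof.
split=> s; rewrite ?payoff2E !payoffS [cs1 [::]]/= [cs2 [::]]/=.
- rewrite [X in _ <= _ + X](payoff_follow u1 (sanction (a1, a2))).
  apply: le_trans (lerD (lexx _) (payoff_follow_dev1 _ _ _)) _.
    by move=> t; case/andP: (sanction_nash (s [::], a2) t).
  rewrite !payoff_sanction /= !eqxx.
  case: eqP => [->|_]; first exact: lexx.
  by move: (incentive1 (s [::])); lra.
- rewrite [X in _ <= _ + X](payoff_follow u2 (sanction (a1, a2))).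
  apply: le_trans (lerD (lexx _) (payoff_follow_dev2 _ _ _)) _.
    by move=> t; case/andP: (sanction_nash (a1, s [::]) t).
  rewrite !payoff_sanction /= !eqxx.
  case: eqP => [->|_]; first exact: lexx.
  by move: (incentive2 (s [::])); lra.
Qed.

(* After any first round the sanctions are an open-loop Nash schedule. *)
Lemma cs_SPE : SPE u1 u2 (n1 + n2).+1 cs1 cs2.
Proof.
move=> k [|x h] _ <-; first by rewrite subn0; exact: cs_nash_root.
rewrite (_ : cont1 cs1 (x :: h) = cont1 (follow1 (sanction x)) h) //.
rewrite (_ : cont2 cs2 (x :: h) = cont2 (follow2 (sanction x)) h) //.
by rewrite cont_follow1 cont_follow2; apply: nash_follow => t; apply: sanction_nash.
Qed.

Lemma carrot_and_stick : ~ stage_nash u1 u2 (a1, a2) ->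
  exists (T : nat) (s1 : strat1 A1 A2) (s2 : strat2 A1 A2),
    [/\ (0 < T)%N, SPE u1 u2 T s1 s2 & locally_suboptimal u1 u2 T s1 s2].
Proof.
by move=> aNN; exists (n1 + n2).+1, cs1, cs2; split; [|exact: cs_SPE|exists 0%N, [::]].
Qed.
End CarrotAndStick.

Section OneShotDeviation.
Variables (T : nat) (s1 : strat1 A1 A2) (s2 : strat2 A1 A2).

Lemma latest_suboptimal : locally_suboptimal u1 u2 T s1 s2 ->
  exists h, [/\ (size h < T)%N, ~ stage_nash u1 u2 (s1 h, s2 h) &
    forall h', (size h < size h')%N -> (size h' < T)%N ->
      stage_nash u1 u2 (s1 h', s2 h')].
Proof.
move=> [k [h [+ hk hN]]]; rewrite -hk => hT; clear hk.
have [n lt_n] : exists n, (T - size h < n)%N by exists (T - size h).+1.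
elim: n h hT hN lt_n => // n IH h hT hN lt_n.
have [[h' [lt h'T h'N]] | none] :=
  classic (exists h', [/\ (size h < size h')%N, (size h' < T)%N &
                          ~ stage_nash u1 u2 (s1 h', s2 h')]).
  by apply: (IH h') => //; lia.
exists h; split=> // h' lt h'T; apply: contraT => /negP h'N.
by case: none; exists h'.
Qed.

Lemma continuation_value w v k :
  (forall a, stage_nash u1 u2 a -> w a.1 a.2 = v) ->
  (forall h', (k <= size h')%N -> (size h' < T)%N -> stage_nash u1 u2 (s1 h', s2 h')) ->
  forall h, size h = k -> payoff1 w (T - k) (cont1 s1 h) (cont2 s2 h) = v *+ (T - k).
Proof.
move=> vN later h hk; rewrite -[in RHS](card_ord (T - k)) -sumr_const.
apply: eq_bigr => t _; apply: (vN (s1 (h ++ _), s2 (h ++ _))).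
by apply: later; rewrite size_cat size_play hk; have := ltn_ord t; lia.
Qed.

(* One-shot deviation principle in the last suboptimal round: a player with
   a unique Nash payoff v cannot affect the continuation payoff, so in an SPE
   it must best-respond there. *)
Hypothesis spe : SPE u1 u2 T s1 s2.

Lemma one_shot1 h v : (forall a, stage_nash u1 u2 a -> u1 a.1 a.2 = v) ->
  (size h < T)%N ->
  (forall h', (size h < size h')%N -> (size h' < T)%N -> stage_nash u1 u2 (s1 h', s2 h')) ->
  best_resp1 u1 (s1 h) (s2 h).
Proof.
move=> vN hT later; have [noDev _] := @spe _ h hT erefl.
apply/forallP => a1'.
pose dev : strat1 A1 A2 := fun h' => if h' is [::] then a1' else cont1 s1 h h'.
have dev_cont x : cont1 dev [:: x] = cont1 (cont1 s1 h) [:: x] by [].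
have := noDev dev; rewrite -(subnSK hT) !payoffS dev_cont !cont1_rcons !cont2_rcons.
rewrite !(continuation_value vN later) ?size_rcons //.
by rewrite /cont1 /cont2 cats0 lerD2r.
Qed.

Lemma one_shot2 h v : (forall a, stage_nash u1 u2 a -> u2 a.1 a.2 = v) ->
  (size h < T)%N ->
  (forall h', (size h < size h')%N -> (size h' < T)%N -> stage_nash u1 u2 (s1 h', s2 h')) ->
  best_resp2 u2 (s1 h) (s2 h).
Proof.
move=> vN hT later; have [_ noDev] := @spe _ h hT erefl.
apply/forallP => a2'.
pose dev : strat2 A1 A2 := fun h' => if h' is [::] then a2' else cont2 s2 h h'.
have dev_cont x : cont2 dev [:: x] = cont2 (cont2 s2 h) [:: x] by [].
have := noDev dev; rewrite !payoff2E -(subnSK hT) !payoffS dev_cont.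
rewrite !cont1_rcons !cont2_rcons !(continuation_value vN later) ?size_rcons //.
by rewrite /cont1 /cont2 cats0 lerD2r.
Qed.

Lemma SPE_enforceable : locally_suboptimal u1 u2 T s1 s2 -> exists a, enforceable a.
Proof.
move=> /latest_suboptimal [h [hT hN later]]; exists (s1 h, s2 h); split=> //.
  by move=> /nash_values_le1 [v vN]; exact: one_shot1 vN hT later.
by move=> /nash_values_le1 [v vN]; exact: one_shot2 vN hT later.
Qed.
End OneShotDeviation.

(* Each player can be given the incentive required by the carrot-and-stick
   construction: by reward and punishment if it has two Nash payoffs, and
   trivially (n = 0) if it already best-responds. *)
Lemma incentive1_exists a1 a2 b : stage_nash u1 u2 b ->
  ((size (nash_values u1) <= 1)%N -> best_resp1 u1 a1 a2) ->
  exists r p n, [/\ stage_nash u1 u2 r, stage_nash u1 u2 p &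
    forall x1, u1 x1 a2 + u1 p.1 p.2 *+ n <= u1 a1 a2 + u1 r.1 r.2 *+ n].
Proof.
move=> bN br; case: (leqP (size (nash_values u1)) 1) => [/br/forallP br1 | big].
  by exists b, b, 0%N; split=> // x1; rewrite !mulr0n !addr0.
have [p [r [pN rN lt]]] := nash_values_gt1 big.
have [n inc] := gap_incentive (fun x1 => u1 x1 a2) (u1 a1 a2) lt.
by exists r, p, n.
Qed.

Lemma incentive2_exists a1 a2 b : stage_nash u1 u2 b ->
  ((size (nash_values u2) <= 1)%N -> best_resp2 u2 a1 a2) ->
  exists r p n, [/\ stage_nash u1 u2 r, stage_nash u1 u2 p &
    forall x2, u2 a1 x2 + u2 p.1 p.2 *+ n <= u2 a1 a2 + u2 r.1 r.2 *+ n].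
Proof.
move=> bN br; case: (leqP (size (nash_values u2)) 1) => [/br/forallP br2 | big].
  by exists b, b, 0%N; split=> // x2; rewrite !mulr0n !addr0.
have [p [r [pN rN lt]]] := nash_values_gt1 big.
have [n inc] := gap_incentive (fun x2 => u2 a1 x2) (u2 a1 a2) lt.
by exists r, p, n.
Qed.

Lemma enforceable_SPE a : enforceable a ->
  exists (T : nat) (s1 : strat1 A1 A2) (s2 : strat2 A1 A2),
    [/\ (0 < T)%N, SPE u1 u2 T s1 s2 & locally_suboptimal u1 u2 T s1 s2].
Proof.
case: a => a1 a2 [aNN br1 br2] /=.
have [b bN] : exists b, stage_nash u1 u2 b.
  case: (leqP (size (nash_values u1)) 1) => [le1 | /nash_values_gt1 [b [_ [bN _ _]]]];
    last by exists b.
  case: (leqP (size (nash_values u2)) 1) => [le2 | /nash_values_gt1 [b [_ [bN _ _]]]];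
    last by exists b.
  by case: aNN; rewrite /stage_nash br1 ?br2.
have [r1 [p1 [n1 [r1N p1N inc1]]]] := incentive1_exists bN br1.
have [r2 [p2 [n2 [r2N p2N inc2]]]] := incentive2_exists bN br2.
exact: carrot_and_stick r1N p1N r2N p2N inc1 inc2 aNN.
Qed.

Definition three_cases : Prop :=
  [\/ [/\ (1 < size (nash_values u1))%N, (1 < size (nash_values u2))%N &
          exists (a1 : A1) (a2 : A2), ~ stage_nash u1 u2 (a1, a2)],
      [/\ (1 < size (nash_values u1))%N, size (nash_values u2) = 1%N &
          exists (a1 a1' : A1) (a2 : A2), u1 a1 a2 < u1 a1' a2 /\ best_resp2 u2 a1 a2]
    | [/\ size (nash_values u1) = 1%N, (1 < size (nash_values u2))%N &
          exists (a1 : A1) (a2 a2' : A2), u2 a1 a2 < u2 a1 a2' /\ best_resp1 u1 a1 a2]].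

Lemma enforceable_cases : (exists a, enforceable a) -> three_cases.
Proof.
move=> [[a1 a2] [aNN br1 br2]] /=.
have exactly1 w w' : (size (nash_values w) <= 1)%N -> (1 < size (nash_values w'))%N ->
    size (nash_values w) = 1%N.
  move=> le1 /nash_values_gt1 [p [_ [pN _ _]]].
  by apply/eqP; rewrite eqn_leq le1 (nash_values_gt0 _ pN).
case: (leqP (size (nash_values u1)) 1) => [le1 | gt1];
  case: (leqP (size (nash_values u2)) 1) => [le2 | gt2].
- by case: aNN; rewrite /stage_nash br1 ?br2.
- apply: Or33; split; [exact: exactly1 le1 gt2 | by [] |].
  have /forallPn [a2' lt] : ~~ best_resp2 u2 a1 a2.
    by apply/negP => B2; apply: aNN; rewrite /stage_nash br1.
  by exists a1, a2, a2'; rewrite ltNge lt br1.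
- apply: Or32; split; [by [] | exact: exactly1 le2 gt1 |].
  have /forallPn [a1' lt] : ~~ best_resp1 u1 a1 a2.
    by apply/negP => B1; apply: aNN; rewrite /stage_nash B1 br2.
  by exists a1, a1', a2; rewrite ltNge lt br2.
- by apply: Or31; split=> //; exists a1, a2.
Qed.

Lemma cases_enforceable : three_cases -> exists a, enforceable a.
Proof.
case=> [[gt1 gt2 [a1 [a2 aNN]]] | [gt1 _ [a1 [a1' [a2 [lt br2]]]]]
       | [_ gt2 [a1 [a2 [a2' [lt br1]]]]]]; exists (a1, a2).
- by split=> //; rewrite leqNgt ?gt1 ?gt2.
- split=> //; last by rewrite leqNgt gt1.
  by case/andP => /forallP/(_ a1'); rewrite leNgt lt.
- split=> //; last by rewrite leqNgt gt2.
  by case/andP => _ /forallP/(_ a2'); rewrite leNgt lt.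
Qed.

End RepeatedGame.

Theorem mainTheorem1 (R : realType) (A1 A2 : finType) (u1 u2 : A1 -> A2 -> R)
  (hA1 : (0 < #|A1|)%N) (hA2 : (0 < #|A2|)%N) :
  (exists (T : nat) (s1 : strat1 A1 A2) (s2 : strat2 A1 A2),
      [/\ (0 < T)%N, SPE u1 u2 T s1 s2 & locally_suboptimal u1 u2 T s1 s2])
  <->
  [\/ [/\ (1 < size (V1 u1 u2))%N, (1 < size (V2 u1 u2))%N &
          exists (a1 : A1) (a2 : A2), ~ stage_nash u1 u2 (a1, a2)],
      [/\ (1 < size (V1 u1 u2))%N, size (V2 u1 u2) = 1%N &
          exists (a1 a1' : A1) (a2 : A2), u1 a1 a2 < u1 a1' a2 /\ best_resp2 u2 a1 a2]
    | [/\ size (V1 u1 u2) = 1%N, (1 < size (V2 u1 u2))%N &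
          exists (a1 : A1) (a2 a2' : A2), u2 a1 a2 < u2 a1 a2' /\ best_resp1 u1 a1 a2]].
Proof.
split=> [[T [s1 [s2 [_ spe sub]]]] | /cases_enforceable [a aE]].
  exact/enforceable_cases/(SPE_enforceable spe sub).
exact: enforceable_SPE aE.
Qed.
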